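(* Let $w_1,\dots,w_n\ge0$, not all zero, and $a_1,\dots,a_n\in\mathbb R$. Let $R(t)=\sum_{i\le n}w_i\exp(a_it)$, $K(t)=\log R(t)$, $v_i(t)=w_i\exp(a_it)/R(t)$ and $\bar a(t)=\sum_{i\le n}v_i(t)a_i$. (i) $K$ is convex, with $$K'(t)=\bar a(t),\quad K''(t)=\sum_{i\le n}v_i(t)\{a_i-\bar a(t)\}^2,\quad K'''(t)=\sum_{i\le n}v_i(t)\{a_i-\bar a(t)\}^3.$$ (ii) For all $t$, $$\log\Big\{\sum_{i\le n}w_ie^{a_it}\Big\}-\log\Big\{\sum_{i\le n}w_i\Big\}=\bar a(0)t+\tfrac12\sum_{i\le n}v_i(0)\{a_i-\bar a(0)\}^2t^2+v(t),$$ where $v_i(0)=w_i/\sum_{j\le n}w_j$, and the remainder satisfies $$|v(t)|\le\tfrac43\mu_n^3|t|^3,\qquad |v(t)|\le\tfrac23 g(\mu_n|t|)\sum_{i\le n}v_i(0)\{a_i-\bar a(0)\}^2|t|^2,$$ with $\mu_n=\max_{i\le n}|a_i-\bar a(0)|$ and $g(u)=u\exp(2u+4u^2)$. *)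

From HB Require Import structures.
From mathcomp Require Import all_boot all_order all_algebra.
From mathcomp Require Import all_classical all_reals all_analysis.
Set Implicit Arguments. Unset Strict Implicit. Unset Printing Implicit Defensive.
Import Order.TTheory GRing.Theory Num.Theory.
Local Open Scope ring_scope.

Section Defs.
Variables (R : realType) (n : nat) (w a : 'I_n -> R).

Definition Rsum (t : R) : R := \sum_(i < n) w i * expR (a i * t).
Definition Kfun (t : R) : R := ln (Rsum t).
Definition vw (i : 'I_n) (t : R) : R := w i * expR (a i * t) / Rsum t.
Definition abar (t : R) : R := \sum_(i < n) vw i t * a i.
Definition cmoment (k : nat) (t : R) : R :=
  \sum_(i < n) vw i t * (a i - abar t) ^+ k.
Definition remainder (t : R) : R :=
  ln (\sum_(i < n) w i * expR (a i * t)) - ln (\sum_(i < n) w i)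
  - (abar 0 * t + 2^-1 * cmoment 2 0 * t ^+ 2).
Definition mu_n : R := \big[Num.max/0]_(i < n) `|a i - abar 0|.
End Defs.

Definition gfun (R : realType) (u : R) : R := u * expR (2 * u + 4 * u ^+ 2).

Definition convex_on_R (R : realType) (f : R -> R) : Prop :=
  forall (x y l : R), 0 <= l -> l <= 1 ->
    f (l * x + (1 - l) * y) <= l * f x + (1 - l) * f y.

From HB Require Import structures.
From mathcomp Require Import all_boot all_order all_algebra.
From mathcomp Require Import all_classical all_reals all_analysis.
From mathcomp Require Import ring lra.
Set Implicit Arguments. Unset Strict Implicit. Unset Printing Implicit Defensive.
Import Order.TTheory GRing.Theory Num.Theory.
Import numFieldNormedType.Exports.
Local Open Scope ring_scope.

(* Write S_k(t) = \sum_i w_i a_i^k e^(a_i t), so that R = S_0 and S_k' = S_(k+1).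
   Then K' = S_1/S_0 = abar, and differentiating the ratios S_k/S_0 once and
   twice more gives the second and third central moments of the tilted weights
   v(t); the second one is nonnegative, hence K is convex.

   Taylor's formula with Lagrange remainder gives v(t) = K'''(s) t^3/6 for some
   |s| <= |t|.  As abar(s) is an average of the a_i, every |a_i - abar(s)| is at
   most 2 mu, so |K'''(s)| <= 2 mu K''(s) and K''(s) <= 4 mu^2: this is the first
   bound.  For the second, e^x >= 1 + x gives R(s) >= R(0) e^(abar(0) s), hence
   v_i(s) <= e^(mu |s|) v_i(0) and K''(s) <= e^(mu |s|) K''(0). *)

Section RealDerivatives.
Variable R : realType.

Lemma Rolle_origin (h dh : R -> R) (x : R) : x != 0 ->
  (forall s : R, is_derive s 1 h (dh s)) -> h 0 = h x ->
  exists c, [/\ c != 0, `|c| <= `|x| & dh c = 0].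
Proof.
move=> x0 Dh hx.
have h_cont : continuous h.
  by move=> r; apply/differentiable_continuous/derivable1_diffP; case: (Dh r).
have h_der s : derivable h s 1 by case: (Dh s).
have dh_crit (c : R) : is_derive c 1 h 0 -> dh c = 0 by case: (Dh c) => _ <- [].
case: (ltgtP x 0) x0 => // [x_lt0|x_gt0] _.
- have [c] := Rolle x_lt0 (fun s _ => h_der s) (continuous_subspaceT h_cont) (esym hx).
  rewrite in_itv /= => /andP[xc c0] /dh_crit dhc.
  by exists c; rewrite lt_eqF // !ltr0_norm // lerN2 ltW.
- have [c] := Rolle x_gt0 (fun s _ => h_der s) (continuous_subspaceT h_cont) hx.
  rewrite in_itv /= => /andP[c0 cx] /dh_crit dhc.
  by exists c; rewrite gt_eqF // !gtr0_norm // ltW.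
Qed.

Lemma taylor2_Lagrange (f0 f1 f2 f3 : R -> R) (t : R) :
  (forall s : R, is_derive s 1 f0 (f1 s)) ->
  (forall s : R, is_derive s 1 f1 (f2 s)) ->
  (forall s : R, is_derive s 1 f2 (f3 s)) ->
  exists s, `|s| <= `|t| /\
    f0 t - f0 0 - (f1 0 * t + 2^-1 * f2 0 * t ^+ 2) = f3 s * t ^+ 3 / 6.
Proof.
move=> D0 D1 D2.
have [->|t0] := eqVneq t 0.
  by exists 0; split => //; rewrite !expr0n /= !mulr0 mul0r !subrr addr0 subrr.
have t3_neq0 : t ^+ 3 != 0 by rewrite expf_neq0.
(* The constant C makes h vanish at t as well as at 0; then Rolle is applied
   to h, h' and h'' in turn. *)
set C := (f0 t - f0 0 - (f1 0 * t + 2^-1 * f2 0 * t ^+ 2)) / t ^+ 3.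
pose h s := f0 s - f0 0 - (f1 0 * s + 2^-1 * f2 0 * s ^+ 2) - C * s ^+ 3.
pose h1 s := f1 s - (f1 0 + f2 0 * s) - C * (3 * s ^+ 2).
pose h2 s := f2 s - f2 0 - C * (6 * s).
pose h3 s := f3 s - C * 6.
have Dh (u : R) : is_derive u 1 h (h1 u).
  by apply: is_derive_eq; rewrite /h1 /GRing.scale /=; field; rewrite ?pnatr_eq0.
have Dh1 (u : R) : is_derive u 1 h1 (h2 u).
  by apply: is_derive_eq; rewrite /h2 /GRing.scale /=; field; rewrite ?pnatr_eq0.
have Dh2 (u : R) : is_derive u 1 h2 (h3 u).
  by apply: is_derive_eq; rewrite /h3 /GRing.scale /=; field; rewrite ?pnatr_eq0.
have [c1 [c1_neq0 c1t h1c1]] : exists c, [/\ c != 0, `|c| <= `|t| & h1 c = 0].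
  apply: (Rolle_origin t0 Dh).
  by rewrite /h /C; field; rewrite ?t0 ?expf_neq0 ?pnatr_eq0.
have [c2 [c2_neq0 c2c1 h2c2]] : exists c, [/\ c != 0, `|c| <= `|c1| & h2 c = 0].
  by apply: (Rolle_origin c1_neq0 Dh1); rewrite h1c1 /h1; field.
have [s [_ sc2 h3s]] : exists c, [/\ c != 0, `|c| <= `|c2| & h3 c = 0].
  by apply: (Rolle_origin c2_neq0 Dh2); rewrite h2c2 /h2; field.
exists s; split; first by rewrite (le_trans sc2) // (le_trans c2c1).
move/eqP: h3s; rewrite /h3 subr_eq0 => /eqP ->.
by rewrite /C; field; rewrite ?t0 ?expf_neq0 ?pnatr_eq0.
Qed.

Lemma derive1_is_derive (f df : R -> R) :
  (forall t : R, is_derive t 1 f (df t)) -> derive1 f = df.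
Proof. by move=> Df; apply/funext => t; rewrite derive1E; case: (Df t). Qed.

Lemma convex_on_R_derive2_ge0 (f f1 f2 : R -> R) :
  (forall t : R, is_derive t 1 f (f1 t)) -> (forall t : R, is_derive t 1 f1 (f2 t)) ->
  (forall t, 0 <= f2 t) -> convex_on_R f.
Proof.
move=> Df Df1 f2_ge0.
have D1 (g dg : R -> R) : (forall t : R, is_derive t 1 g (dg t)) -> 'D_1 g = dg.
  by move=> Dg; apply/funext => r; case: (Dg r).
have f_cont : continuous f.
  by move=> r; apply/differentiable_continuous/derivable1_diffP; case: (Df r).
have conv_le x y (l : {i01 R}) : x <= y ->
    (f : R -> R^o) (conv l (x : R^o) y) <= conv l (f x : R^o) (f y).
  move=> xy; apply: second_derivative_convex => //.
  - by move=> z _; rewrite (D1 _ _ Df); case: (Df1 z) => _ ->.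
  - exact/cvg_at_left_filter/f_cont.
  - exact/cvg_at_right_filter/f_cont.
  - by move=> z _; rewrite (D1 _ _ Df); case: (Df1 z).
move=> x y l l0 l1.
have [xy|yx] := leP x y; first by have := conv_le x y (Itv01 l0 l1) xy; rewrite !convRE.
have l0' : 0 <= 1 - l by rewrite subr_ge0.
have l1' : 1 - l <= 1 by rewrite gerBl.
have := conv_le y x (Itv01 l0' l1') (ltW yx); rewrite !convRE /=.
have -> : unstable.onem (1 - l) = l by rewrite /unstable.onem; ring.
by rewrite addrC [X in _ <= X]addrC.
Qed.

End RealDerivatives.

Section DeriveRules.
Variable R : realType.
Implicit Types (f g : R -> R) (df dg x : R).

Lemma is_derive1_mul f g df dg x : is_derive x 1 f df -> is_derive x 1 g dg ->
  is_derive x 1 (fun y => f y * g y) (df * g x + f x * dg).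
Proof.
move=> Df Dg; have := is_deriveM Df Dg.
have -> : (f * g) = (fun y => f y * g y) by apply/funext.
by rewrite /GRing.scale /= addrC mulrC [f x * _]mulrC.
Qed.

Lemma is_derive1_div f g df dg x : g x != 0 ->
  is_derive x 1 f df -> is_derive x 1 g dg ->
  is_derive x 1 (fun y => f y / g y) ((df * g x - f x * dg) / g x ^+ 2).
Proof.
move=> gx0 Df Dg; apply: is_derive_eq (is_derive1_mul Df (is_deriveV gx0 Dg)) _.
by rewrite /GRing.scale /=; field.
Qed.

Lemma is_derive1_expRM (b x : R) :
  is_derive x 1 (fun y => expR (b * y)) (b * expR (b * x)).
Proof.
have := @is_derive1_comp R expR (fun y => b * y) x (expR (b * x)) b.
rewrite [_ * b]mulrC; apply.
have : is_derive x 1 (fun y : R => b * y) (b * 1) by exact: is_deriveZ.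
by rewrite mulr1.
Qed.

Lemma is_derive1_lnf f df x : 0 < f x -> is_derive x 1 f df ->
  is_derive x 1 (fun y => ln (f y)) (df / f x).
Proof.
move=> fx_gt0 Df; have := @is_derive1_comp R (@ln R) f x (f x)^-1 df.
by rewrite mulrC; apply => //; exact: is_derive1_ln.
Qed.

End DeriveRules.

Section WeightedMoments.
Variables (R : realFieldType) (n : nat) (p x : 'I_n -> R).
Hypotheses (p_ge0 : forall i, 0 <= p i) (sum_p1 : \sum_(i < n) p i = 1).

Lemma weighted_sumB c : \sum_(i < n) p i * (x i - c) = \sum_(i < n) p i * x i - c.
Proof.
rewrite (eq_bigr (fun i => p i * x i - c * p i)); last by move=> i _; ring.
by rewrite sumrB -mulr_sumr sum_p1 mulr1.
Qed.

Lemma weighted_sum_sqrB c : \sum_(i < n) p i * (x i - c) ^+ 2 =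
  \sum_(i < n) p i * x i ^+ 2 - 2 * c * \sum_(i < n) p i * x i + c ^+ 2.
Proof.
transitivity (\sum_(i < n) (p i * x i ^+ 2 + (- (2 * c)) * (p i * x i) + c ^+ 2 * p i)).
  by apply: eq_bigr => i _; ring.
by rewrite !big_split /= -!mulr_sumr sum_p1; ring.
Qed.

Lemma weighted_sum_cubeB c : \sum_(i < n) p i * (x i - c) ^+ 3 =
  \sum_(i < n) p i * x i ^+ 3 - 3 * c * \sum_(i < n) p i * x i ^+ 2
  + 3 * c ^+ 2 * \sum_(i < n) p i * x i - c ^+ 3.
Proof.
transitivity (\sum_(i < n) (p i * x i ^+ 3 + (- (3 * c)) * (p i * x i ^+ 2)
   + (3 * c ^+ 2) * (p i * x i) + (- c ^+ 3) * p i)).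
  by apply: eq_bigr => i _; ring.
by rewrite !big_split /= -!mulr_sumr sum_p1; ring.
Qed.

Lemma weighted_sum_sqrB_mean c : \sum_(i < n) p i * (x i - c) ^+ 2 =
  \sum_(i < n) p i * (x i - \sum_(j < n) p j * x j) ^+ 2
  + (\sum_(j < n) p j * x j - c) ^+ 2.
Proof. by rewrite !weighted_sum_sqrB; ring. Qed.

Lemma norm_weighted_sumB_le c M : (forall i, `|x i - c| <= M) ->
  `|\sum_(i < n) p i * x i - c| <= M.
Proof.
move=> x_near; rewrite -weighted_sumB.
apply: le_trans (ler_norm_sum _ _ _) _.
apply: le_trans (_ : \sum_(i < n) p i * M <= _); last by rewrite -mulr_suml sum_p1 mul1r.
by apply: ler_sum => i _; rewrite normrM ger0_norm // ler_wpM2l.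
Qed.

Lemma weighted_sum_sqr_le c D : (forall i, `|x i - c| <= D) ->
  \sum_(i < n) p i * (x i - c) ^+ 2 <= D ^+ 2.
Proof.
move=> x_near.
apply: le_trans (_ : \sum_(i < n) p i * D ^+ 2 <= _); last by rewrite -mulr_suml sum_p1 mul1r.
apply: ler_sum => i _; rewrite ler_wpM2l //.
have := x_near i; have := normr_ge0 (x i - c); rewrite -real_normK ?num_real //; nra.
Qed.

Lemma norm_weighted_sum_cube_le c D : (forall i, `|x i - c| <= D) ->
  `|\sum_(i < n) p i * (x i - c) ^+ 3| <= D * \sum_(i < n) p i * (x i - c) ^+ 2.
Proof.
move=> x_near; apply: le_trans (ler_norm_sum _ _ _) _; rewrite mulr_sumr.
apply: ler_sum => i _.
rewrite normrM ger0_norm // exprS normrM [`|_ ^+ 2|]ger0_norm ?sqr_ge0 //.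
have := x_near i; have : 0 <= p i * (x i - c) ^+ 2 by rewrite mulr_ge0 ?sqr_ge0.
nra.
Qed.

End WeightedMoments.

Section LogSumExp.
Variables (R : realType) (n : nat) (w a : 'I_n -> R).
Hypotheses (w_ge0 : forall i, 0 <= w i) (w_neq0 : exists i, w i != 0).
Implicit Types (k : nat) (s t : R).

Definition expmoment (k : nat) (t : R) : R :=
  \sum_(i < n) w i * a i ^+ k * expR (a i * t).
Local Notation S := expmoment.

Lemma expmoment0_gt0 t : 0 < S 0 t.
Proof.
have [i0 wi0_neq0] := w_neq0.
have wi0_gt0 : 0 < w i0 by rewrite lt_def wi0_neq0 w_ge0.
rewrite /S (bigD1 i0) //= expr0 mulr1 ltr_wpDr ?mulr_gt0 ?expR_gt0 //.
by apply: sumr_ge0 => i _; rewrite expr0 mulr1 mulr_ge0 ?expR_ge0.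
Qed.

Lemma expmoment0_neq0 t : S 0 t != 0.
Proof. by rewrite gt_eqF ?expmoment0_gt0. Qed.

Lemma expmoment0_at0 : S 0 0 = \sum_(i < n) w i.
Proof. by apply: eq_bigr => i _; rewrite mulr0 expR0 expr0 !mulr1. Qed.

Lemma RsumE t : Rsum w a t = S 0 t.
Proof. by apply: eq_bigr => i _; rewrite expr0 mulr1. Qed.

Lemma vwE i t : vw w a i t = w i * expR (a i * t) / S 0 t.
Proof. by rewrite /vw RsumE. Qed.

Lemma vw_ge0 i t : 0 <= vw w a i t.
Proof. by rewrite vwE divr_ge0 ?mulr_ge0 ?expR_ge0 // ltW // expmoment0_gt0. Qed.

Lemma sum_vw_exprE k t : \sum_(i < n) vw w a i t * a i ^+ k = S k t / S 0 t.
Proof. by rewrite /S mulr_suml; apply: eq_bigr => i _; rewrite vwE; ring. Qed.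

Lemma sum_vw t : \sum_(i < n) vw w a i t = 1.
Proof.
have := sum_vw_exprE 0 t; under eq_bigr do rewrite expr0 mulr1.
by move=> ->; rewrite divff ?expmoment0_neq0.
Qed.

Lemma abarE t : abar w a t = S 1 t / S 0 t.
Proof. by rewrite -sum_vw_exprE; apply: eq_bigr => i _; rewrite expr1. Qed.

Lemma cmoment2E t : cmoment w a 2 t = S 2 t / S 0 t - (S 1 t / S 0 t) ^+ 2.
Proof.
by rewrite /cmoment weighted_sum_sqrB ?sum_vw // -/(abar w a t) sum_vw_exprE abarE; ring.
Qed.

Lemma cmoment3E t : cmoment w a 3 t =
  S 3 t / S 0 t - 3 * (S 1 t / S 0 t) * (S 2 t / S 0 t) + 2 * (S 1 t / S 0 t) ^+ 3.
Proof.
by rewrite /cmoment weighted_sum_cubeB ?sum_vw // -/(abar w a t) !sum_vw_exprE abarE; ring.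
Qed.

Lemma is_derive_expmoment k t : is_derive t 1 (S k) (S k.+1 t).
Proof.
have Dterm (i : 'I_n) : is_derive t 1 (fun s => w i * a i ^+ k * expR (a i * s))
    (w i * a i ^+ k.+1 * expR (a i * t)).
  apply: is_derive_eq (is_deriveZ (w i * a i ^+ k) (is_derive1_expRM (a i) t)) _.
  by rewrite exprS /GRing.scale /=; ring.
have := is_derive_sum Dterm.
by congr is_derive; apply/funext => s; rewrite /S fct_sumE.
Qed.

Lemma is_derive_expmoment_ratio k t : is_derive t 1 (fun s => S k s / S 0 s)
  (S k.+1 t / S 0 t - S k t / S 0 t * (S 1 t / S 0 t)).
Proof.
have := is_derive1_div (expmoment0_neq0 t) (is_derive_expmoment k t) (is_derive_expmoment 0 t).
by move/is_derive_eq; apply; field; rewrite expmoment0_neq0.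
Qed.

Lemma is_derive_Kfun t : is_derive t 1 (Kfun w a) (abar w a t).
Proof.
have -> : Kfun w a = fun s => ln (S 0 s) by apply/funext => s; rewrite /Kfun RsumE.
by rewrite abarE; exact: is_derive1_lnf (expmoment0_gt0 t) (is_derive_expmoment 0 t).
Qed.

Lemma is_derive_abar t : is_derive t 1 (abar w a) (cmoment w a 2 t).
Proof.
have -> : abar w a = fun s => S 1 s / S 0 s by apply/funext => s; rewrite abarE.
by apply: is_derive_eq (is_derive_expmoment_ratio 1 t) _; rewrite cmoment2E; ring.
Qed.

Lemma is_derive_cmoment2 t : is_derive t 1 (cmoment w a 2) (cmoment w a 3 t).
Proof.
have -> : cmoment w a 2 = fun s => S 2 s / S 0 s - S 1 s / S 0 s * (S 1 s / S 0 s).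
  by apply/funext => s; rewrite cmoment2E expr2.
have D1 := is_derive_expmoment_ratio 1 t.
apply: is_derive_eq; first exact: is_deriveB (is_derive_expmoment_ratio 2 t) (is_derive1_mul D1 D1).
by rewrite cmoment3E; ring.
Qed.

Lemma cmoment2_ge0 t : 0 <= cmoment w a 2 t.
Proof. by apply: sumr_ge0 => i _; rewrite mulr_ge0 ?vw_ge0 ?sqr_ge0. Qed.

Lemma Kfun_convex : convex_on_R (Kfun w a).
Proof. exact: convex_on_R_derive2_ge0 is_derive_Kfun is_derive_abar cmoment2_ge0. Qed.

Lemma vw_at0 i : vw w a i 0 = w i / \sum_(j < n) w j.
Proof. by rewrite vwE mulr0 expR0 mulr1 expmoment0_at0. Qed.

Lemma remainder_Lagrange t : exists s, `|s| <= `|t| /\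
  remainder w a t = cmoment w a 3 s * t ^+ 3 / 6.
Proof.
have [s [st taylor]] := taylor2_Lagrange t is_derive_Kfun is_derive_abar is_derive_cmoment2.
exists s; split => //; rewrite -taylor.
have -> : Kfun w a 0 = ln (\sum_(i < n) w i) by rewrite /Kfun RsumE expmoment0_at0.
by rewrite /remainder /Kfun /Rsum.
Qed.

Local Notation mu := (mu_n w a).

Lemma norm_sub_abar0_le_mu i : `|a i - abar w a 0| <= mu.
Proof. exact: le_bigmax. Qed.

Lemma mu_n_ge0 : 0 <= mu.
Proof. by have [i _] := w_neq0; exact: le_trans (normr_ge0 _) (norm_sub_abar0_le_mu i). Qed.

(* abar s is a vw(s)-average of the a_i, which all lie within mu of abar 0. *)
Lemma norm_sub_abar_le i s : `|a i - abar w a s| <= 2 * mu.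
Proof.
have abar_near : `|abar w a s - abar w a 0| <= mu.
  exact (norm_weighted_sumB_le (vw_ge0^~ s) (sum_vw s) norm_sub_abar0_le_mu).
have -> : a i - abar w a s = (a i - abar w a 0) - (abar w a s - abar w a 0) by ring.
by apply: le_trans (ler_normB _ _) _; have := norm_sub_abar0_le_mu i; lra.
Qed.

Lemma norm_cmoment3_le s : `|cmoment w a 3 s| <= 2 * mu * cmoment w a 2 s.
Proof. exact (norm_weighted_sum_cube_le (vw_ge0^~ s) (norm_sub_abar_le ^~ s)). Qed.

Lemma cmoment2_le s : cmoment w a 2 s <= 4 * mu ^+ 2.
Proof.
have -> : 4 * mu ^+ 2 = (2 * mu) ^+ 2 by ring.
exact (weighted_sum_sqr_le (vw_ge0^~ s) (sum_vw s) (norm_sub_abar_le ^~ s)).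
Qed.

Lemma expmoment0_ge s : expR (abar w a 0 * s) * S 0 0 <= S 0 s.
Proof.
set c := abar w a 0.
have centered : \sum_(i < n) w i * (a i - c) = 0.
  transitivity (S 0 0 * \sum_(i < n) vw w a i 0 * (a i - c)).
    rewrite mulr_sumr; apply: eq_bigr => i _; rewrite vwE mulr0 expR0.
    by field; exact: expmoment0_neq0.
  by rewrite weighted_sumB ?sum_vw // subrr mulr0.
have -> : expR (c * s) * S 0 0 = \sum_(i < n) w i * expR (c * s) * (1 + (a i - c) * s).
  transitivity (\sum_(i < n) (expR (c * s) * w i + (expR (c * s) * s) * (w i * (a i - c)))).
    by rewrite big_split /= -!mulr_sumr centered mulr0 addr0 expmoment0_at0.
  by apply: eq_bigr => i _; ring.
apply: ler_sum => i _; rewrite expr0 mulr1 -mulrA ler_wpM2l //.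
have -> : expR (a i * s) = expR (c * s) * expR ((a i - c) * s).
  by rewrite -expRD; congr expR; ring.
by rewrite ler_wpM2l ?expR_ge0 // expR_ge1Dx.
Qed.

Lemma vw_le_expR i s : vw w a i s <= expR (mu * `|s|) * vw w a i 0.
Proof.
rewrite !vwE mulr0 expR0 mulr1.
set E := expR (mu * `|s|); set E0 := expR (abar w a 0 * s).
rewrite ler_pdivrMr ?expmoment0_gt0 //.
apply: le_trans (_ : w i * E0 * E <= _).
  rewrite -mulrA ler_wpM2l // /E0 /E -expRD ler_expR.
  have : (a i - abar w a 0) * s <= mu * `|s|.
    by apply: le_trans (ler_norm _) _; rewrite normrM ler_wpM2r ?norm_sub_abar0_le_mu.
  lra.
have -> : w i * E0 * E = E * (w i / S 0 0) * (E0 * S 0 0).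
  by field; rewrite expmoment0_neq0.
rewrite ler_wpM2l ?expmoment0_ge //.
by rewrite mulr_ge0 ?expR_ge0 // divr_ge0 // ltW // expmoment0_gt0.
Qed.

Lemma cmoment2_le_expR s : cmoment w a 2 s <= expR (mu * `|s|) * cmoment w a 2 0.
Proof.
apply: le_trans (_ : \sum_(i < n) vw w a i s * (a i - abar w a 0) ^+ 2 <= _).
  by rewrite weighted_sum_sqrB_mean ?sum_vw // lerDl sqr_ge0.
rewrite /cmoment mulr_sumr; apply: ler_sum => i _.
by rewrite mulrA ler_wpM2r ?sqr_ge0 ?vw_le_expR.
Qed.

Lemma norm_remainder_le_cube t : `|remainder w a t| <= 4 / 3 * mu ^+ 3 * `|t| ^+ 3.
Proof.
have [s [_ ->]] := remainder_Lagrange t.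
rewrite !normrM ?normrX [`|_^-1|]ger0_norm ?invr_ge0 ?ler0n //.
have c3_le : `|cmoment w a 3 s| <= 8 * mu ^+ 3.
  apply: le_trans (norm_cmoment3_le s) _.
  by have := cmoment2_le s; have := mu_n_ge0; nra.
have := ler_wpM2r (exprn_ge0 3 (normr_ge0 t)) c3_le; lra.
Qed.

Lemma norm_remainder_le_gfun t :
  `|remainder w a t| <= 2 / 3 * gfun (mu * `|t|) * cmoment w a 2 0 * `|t| ^+ 2.
Proof.
have [s [st ->]] := remainder_Lagrange t.
rewrite !normrM ?normrX [`|_^-1|]ger0_norm ?invr_ge0 ?ler0n // /gfun.
set G := expR (2 * (mu * `|t|) + 4 * (mu * `|t|) ^+ 2).
have expR_le_G : expR (mu * `|s|) <= G.
  rewrite /G ler_expR.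
  have : mu * `|s| <= mu * `|t| by rewrite ler_wpM2l ?mu_n_ge0.
  have : 0 <= mu * `|t| by rewrite mulr_ge0 ?mu_n_ge0.
  have := sqr_ge0 (mu * `|t|); lra.
have c3_le : `|cmoment w a 3 s| <= 2 * mu * (G * cmoment w a 2 0).
  apply: le_trans (norm_cmoment3_le s) _.
  rewrite ler_wpM2l ?mulr_ge0 ?mu_n_ge0 //.
  by apply: le_trans (cmoment2_le_expR s) _; rewrite ler_wpM2r ?cmoment2_ge0.
have := ler_wpM2r (exprn_ge0 3 (normr_ge0 t)) c3_le.
have : 0 <= mu * G * cmoment w a 2 0 * `|t| ^+ 3.
  by rewrite !mulr_ge0 ?mu_n_ge0 ?expR_ge0 ?cmoment2_ge0 ?exprn_ge0.
nra.
Qed.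

End LogSumExp.

Theorem lemmaA2 (R : realType) (n : nat) (w a : 'I_n -> R)
  (hw : forall i, 0 <= w i) (hnz : exists i, w i != 0) :
  (* (i) *)
  (convex_on_R (Kfun w a)
   /\ (forall t : R, is_derive t 1 (Kfun w a) (abar w a t))
   /\ (forall t : R, is_derive t 1 (derive1 (Kfun w a)) (cmoment w a 2 t))
   /\ (forall t : R, is_derive t 1 (derive1n 2 (Kfun w a)) (cmoment w a 3 t)))
  /\
  (* (ii) *)
  ((forall i, vw w a i 0 = w i / \sum_(j < n) w j)
   /\ (forall t : R,
        ln (\sum_(i < n) w i * expR (a i * t)) - ln (\sum_(i < n) w i)
        = abar w a 0 * t + 2^-1 * cmoment w a 2 0 * t ^+ 2 + remainder w a t)
   /\ (forall t : R,
        `|remainder w a t| <= 4 / 3 * mu_n w a ^+ 3 * `|t| ^+ 3)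
   /\ (forall t : R,
        `|remainder w a t| <=
          2 / 3 * gfun (mu_n w a * `|t|) * cmoment w a 2 0 * `|t| ^+ 2)).
Proof.
have DK := is_derive_Kfun a hw hnz; have Dabar := is_derive_abar a hw hnz.
have D2K : derive1 (Kfun w a) = abar w a := derive1_is_derive DK.
split; split; first exact: Kfun_convex a hw hnz.
- split; first exact: DK.
  split; first by rewrite D2K.
  rewrite derive1nS derive1n1 D2K (derive1_is_derive Dabar).
  exact: is_derive_cmoment2 a hw hnz.
- exact: vw_at0.
- split; first by move=> t; rewrite /remainder; ring.
  split; [exact: norm_remainder_le_cube a hw hnz | exact: norm_remainder_le_gfun a hw hnz].
Qed.
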